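(* There is a constant $C>0$ such that for every $n$ and every set $T\subseteq V_n$, the extension complexity of $\operatorname{dom}(P_{T\text{-cut}}(n))$ is at most $C\, n^2\, 2^{|T|}$.
   Context: $K_n=(V_n,E_n)$ is the complete graph on $n$ nodes. For $T\subseteq V_n$, a $T$-cut is an edge set $\delta(S)=\{\{v,w\}\in E_n : v\in S, w\notin S\}$ for some $S\subseteq V_n$ with $|S\cap T|$ odd. $P_{T\text{-cut}}(n)$ is the convex hull of characteristic vectors of $T$-cuts and $\operatorname{dom}(P_{T\text{-cut}}(n)) = P_{T\text{-cut}}(n)+\mathbb{R}^{E_n}_+$. Extension complexity $\operatorname{xc}(P)$ is the minimum number of facets of a polyhedron $Q$ with $P=\pi(Q)$ for a linear map $\pi$. *)

From HB Require Import structures.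
From mathcomp Require Import all_boot all_order all_algebra.
Set Implicit Arguments. Unset Strict Implicit. Unset Printing Implicit Defensive.
Import Order.TTheory GRing.Theory Num.Theory.
Local Open Scope ring_scope.

Section Defs.
Variable R : realFieldType.

Definition edge (n : nat) := {e : {set 'I_n} | #|e| == 2%N}.

(* characteristic vector of delta(S): e = {v,w} is in delta(S) iff exactly
   one endpoint of e lies in S *)
Definition cut_vec (n : nat) (S : {set 'I_n}) : edge n -> R :=
  fun e => if #|val e :&: S| == 1%N then 1 else 0.

Definition Tcut_set (n : nat) (T S : {set 'I_n}) : bool := odd #|S :&: T|.

Definition PTcut (n : nat) (T : {set 'I_n}) : (edge n -> R) -> Prop :=
  fun x => exists lam : {set 'I_n} -> R,
    (forall S, 0 <= lam S) /\
    (forall S, ~~ Tcut_set T S -> lam S = 0) /\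
    (\sum_(S : {set 'I_n}) lam S = 1) /\
    (forall e, x e = \sum_(S : {set 'I_n}) lam S * cut_vec S e).

Definition domTcut (n : nat) (T : {set 'I_n}) : (edge n -> R) -> Prop :=
  fun x => exists y, PTcut T y /\ forall e, y e <= x e.

Definition point (d : nat) := 'I_d -> R.

Definition dotp (d : nat) (c x : point d) : R := \sum_(i < d) c i * x i.

Definition polyh (d m : nat) (A : 'I_m -> point d) (b : 'I_m -> R) :
  point d -> Prop := fun y => forall j, dotp (A j) y <= b j.

Definition aff_indep (d k : nat) (p : 'I_k -> point d) : Prop :=
  forall lam : 'I_k -> R, \sum_(i < k) lam i = 0 ->
    (forall t, \sum_(i < k) lam i * p i t = 0) -> forall i, lam i = 0.

Definition has_aff_indep (d : nat) (X : point d -> Prop) (k : nat) : Prop :=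
  exists p : 'I_k -> point d, (forall i, X (p i)) /\ aff_indep p.

(* dim X = k - 1 (so k = 0 means X is empty, dimension -1) *)
Definition dim_eq_pred (d : nat) (X : point d -> Prop) (k : nat) : Prop :=
  has_aff_indep X k /\ ~ has_aff_indep X k.+1.

Definition face (d : nat) (Q F : point d -> Prop) : Prop :=
  exists (c : point d) (delta : R),
    (forall x, Q x -> dotp c x <= delta) /\
    (forall x, F x <-> (Q x /\ dotp c x = delta)).

Definition facet (d : nat) (Q F : point d -> Prop) : Prop :=
  face Q F /\ exists k, dim_eq_pred Q k.+1 /\ dim_eq_pred F k.

Definition facets_at_most (d : nat) (Q : point d -> Prop) (k : nat) : Prop :=
  exists Fs : 'I_k -> (point d -> Prop),
    forall F, facet Q F -> exists j, forall x, F x <-> Fs j x.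

Definition xc_at_most (I : finType) (P : (I -> R) -> Prop) (k : nat) : Prop :=
  exists (d m : nat) (A : 'I_m -> point d) (b : 'I_m -> R)
         (M : I -> point d),
    facets_at_most (polyh A b) k /\
    (forall x, P x <-> exists y, polyh A b y /\ forall e, x e = dotp (M e) y).

End Defs.

(* dom(P_{T-cut}) is the projection of a polyhedron with one block
   of variables per trace U = S :&: T of a T-cut: a weight lam_U, potentials
   0 <= pi_{U,v} <= lam_U equal to 0 on U and to lam_U on T \ U, and edge
   variables x^U_e >= |pi_{U,v} - pi_{U,w}| for e = {v, w}; the weights sum to 1,
   vanish for even U, and x = sum_U x^U.  Exactness comes from rounding
   pi_U / lam_U to a distribution on cuts with trace U that separates each edge
   {v, w} with probability at most |pi_{U,v} - pi_{U,w}| / lam_U.  The system has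
   2^|T| (n^2 + 2n + 2) + 2 inequalities, and a polyhedron given by m inequalities
   has at most m + 1 facets, each cut out by one of them (or empty). *)

From HB Require Import structures.
From mathcomp Require Import all_boot all_order all_algebra.
From mathcomp Require Import ring lra zify.
From Stdlib Require Import Classical.
Set Implicit Arguments. Unset Strict Implicit. Unset Printing Implicit Defensive.
Import Order.TTheory GRing.Theory Num.Theory.
Local Open Scope ring_scope.

Lemma sum_ord_const (R : realFieldType) k (x : R) : \sum_(i < k) x = x * k%:R.
Proof. by rewrite sumr_const card_ord mulr_natr. Qed.

Lemma mean_le (R : realFieldType) k (a : 'I_k.+1 -> R) (be : R) :
  (forall i, a i <= be) -> (\sum_i a i) / k.+1%:R <= be.
Proof.
move=> h; rewrite ler_pdivrMr ?ltr0Sn // -sum_ord_const; exact: ler_sum.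
Qed.

Lemma mean_lt (R : realFieldType) k (a : 'I_k.+1 -> R) (be : R) (i : 'I_k.+1) :
  (forall j, a j <= be) -> a i < be -> (\sum_j a j) / k.+1%:R < be.
Proof.
move=> h hi; rewrite ltr_pdivrMr ?ltr0Sn // -sum_ord_const.
rewrite [ltLHS](bigD1 i) // [ltRHS](bigD1 i) //=.
by apply: ltr_leD => //; apply: ler_sum => j _.
Qed.

Lemma mean_eq (R : realFieldType) k (a : 'I_k.+1 -> R) (be : R) :
  (forall i, a i = be) -> (\sum_i a i) / k.+1%:R = be.
Proof.
by move=> h; rewrite (eq_bigr _ (fun i _ => h i)) sum_ord_const mulfK // pnatr_eq0.
Qed.

Lemma exists_pos_scaling (R : realFieldType) (I : finType) (P : pred I) (D s : I -> R) :
  (forall j, P j -> 0 < s j) -> exists2 t, 0 < t & forall j, P j -> t * D j <= s j.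
Proof.
move=> hs; pose S := \sum_(j | P j) `|D j| / s j.
have ratio_ge0 j : P j -> 0 <= `|D j| / s j by move/hs/ltW; apply: divr_ge0.
have hS : 0 <= S by apply: sumr_ge0.
exists (1 + S)^-1 => [|j hj]; first by rewrite invr_gt0; lra.
have sj := hs j hj.
have : `|D j| <= S * s j.
  rewrite -ler_pdivrMr // /S (bigD1 j) //= lerDl.
  by apply: sumr_ge0 => i /andP[] /ratio_ge0.
rewrite mulrC ler_pdivrMl ?ltr_wpDr //; have := ler_norm (D j); nra.
Qed.

Section PolyhedronFacets.
Variables (R : realFieldType) (d : nat).
Local Notation pt := (point R d).

Lemma dotp_sum (I : finType) (c : pt) (u : I -> pt) :
  dotp c (fun t => \sum_i u i t) = \sum_i dotp c (u i).
Proof. rewrite /dotp; under eq_bigr do rewrite mulr_sumr; exact: exchange_big. Qed.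

Lemma dotp_scale (c y : pt) (a : R) : dotp c (fun t => a * y t) = a * dotp c y.
Proof. by rewrite /dotp mulr_sumr; apply: eq_bigr => i _; rewrite mulrCA. Qed.

Lemma dotp_comb (c y z : pt) (a s : R) :
  dotp c (fun t => a * y t + s * z t) = a * dotp c y + s * dotp c z.
Proof. rewrite /dotp !mulr_sumr -big_split /=; apply: eq_bigr => i _; ring. Qed.

Lemma eq_dotp (c y z : pt) : y =1 z -> dotp c y = dotp c z.
Proof. by move=> h; apply: eq_bigr => i _; rewrite h. Qed.

Definition extend_pts k (p : 'I_k -> pt) (z : pt) : 'I_k.+1 -> pt :=
  fun i => if unlift ord0 i is Some j then p j else z.

Lemma extend_ptsP k (p : 'I_k -> pt) z (X : pt -> Prop) :
  (forall i, X (p i)) -> X z -> forall i, X (extend_pts p z i).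
Proof. by move=> hp hz i; rewrite /extend_pts; case: unlift. Qed.

Lemma sum_extend_pts k (p : 'I_k -> pt) z (F : 'I_k.+1 -> pt -> R) :
  \sum_i F i (extend_pts p z i) = F ord0 z + \sum_i F (lift ord0 i) (p i).
Proof. by rewrite big_ord_recl /extend_pts unlift_none; under eq_bigr do rewrite liftK. Qed.

Lemma aff_indep_extend k (p : 'I_k -> pt) z (g : pt) gam :
  aff_indep p -> (forall i, dotp g (p i) = gam) -> dotp g z != gam ->
  aff_indep (extend_pts p z).
Proof.
move=> hp hg hz lam hs ht.
have comb0 : \sum_i lam i * dotp g (extend_pts p z i) = 0.
  rewrite -(eq_bigr _ (fun i _ => dotp_scale g _ (lam i))) -dotp_sum.
  by apply: big1 => t _; rewrite ht mulr0.
have {}hs : \sum_i lam (lift ord0 i) = - lam ord0.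
  by apply/eqP; rewrite -addr_eq0 addrC -big_ord_recl hs.
move: comb0; rewrite (sum_extend_pts _ _ (fun i y => lam i * dotp g y)).
under eq_bigr do rewrite hg; rewrite -mulr_suml hs => comb0.
have lam0 : lam ord0 = 0.
  have : lam ord0 * (dotp g z - gam) == 0 by rewrite -[X in _ == X]comb0; apply/eqP; ring.
  by rewrite mulf_eq0 subr_eq0 (negbTE hz) orbF => /eqP.
have lamS : forall i, lam (lift ord0 i) = 0.
  apply: hp => [|t]; first by rewrite hs lam0 oppr0.
  by have := ht t; rewrite (sum_extend_pts _ _ (fun i y => lam i * y t)) lam0 mul0r add0r.
by move=> i; case: (unliftP ord0 i) => [j ->|->].
Qed.

Variables (m : nat) (A : 'I_m -> pt) (b : 'I_m -> R).
Local Notation Q := (polyh A b).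

Lemma polyh_extend_past (y0 z : pt) : Q y0 ->
  (forall j, dotp (A j) y0 < b j \/ dotp (A j) z = dotp (A j) y0) ->
  exists2 t, 0 < t & Q (fun i => (1 + t) * y0 i + (- t) * z i).
Proof.
move=> Qy0 hrow.
have slack_gt0 j : dotp (A j) y0 < b j -> 0 < b j - dotp (A j) y0 by rewrite subr_gt0.
have [t t_gt0 ht] := exists_pos_scaling (fun j => dotp (A j) y0 - dotp (A j) z) slack_gt0.
exists t => // j; rewrite dotp_comb.
case: (hrow j) => [hj|->]; last by have := Qy0 j; lra.
by have := ht j hj; lra.
Qed.

Lemma face_rel_interior (F : pt -> Prop) (c : pt) del f0 :
  (forall x, F x <-> Q x /\ dotp c x = del) -> F f0 ->
  exists2 y0, F y0 & forall j, dotp (A j) y0 < b j \/ forall y, F y -> dotp (A j) y = b j.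
Proof.
move=> hF Ff0.
have FQ y : F y -> Q y by case/hF.
have /fin_all_exists[yf hyf] j : exists y,
    F y /\ (dotp (A j) y < b j \/ forall y', F y' -> dotp (A j) y' = b j).
  case: (classic (exists2 y, F y & dotp (A j) y < b j)) => [[y Fy hy]|hno].
    by exists y; split => //; left.
  exists f0; split => //; right => y Fy; apply/eqP; rewrite eq_le (FQ y Fy j) /=.
  by rewrite leNgt; apply/negP => hy; apply: hno; exists y.
pose g := extend_pts yf f0.
have Fg : forall i, F (g i) by apply: extend_ptsP => // j; case: (hyf j).
pose y0 t := (m.+1%:R)^-1 * \sum_i g i t.
have dotp_y0 a : dotp a y0 = (\sum_i dotp a (g i)) / m.+1%:R.
  by rewrite dotp_scale dotp_sum mulrC.
have Qy0 : Q y0 by move=> j; rewrite dotp_y0; apply: mean_le => i; exact: FQ.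
exists y0.
  by apply/hF; split => //; rewrite dotp_y0; apply: mean_eq => i; case/hF: (Fg i).
move=> j; case: (hyf j) => _ [hj|]; [left | by right].
rewrite dotp_y0; apply: (mean_lt (i := lift ord0 j)) => [i|]; first exact: FQ.
by rewrite /g /extend_pts liftK.
Qed.

Lemma facet_tight_row F f0 : facet Q F -> F f0 ->
  exists j, (forall y, F y -> dotp (A j) y = b j) /\ exists2 z, Q z & dotp (A j) z < b j.
Proof.
move=> [[c [del [hval hF]]] [k [[hQk _] [_ hFk]]]] Ff0.
have [z Qz hz] : exists2 z, Q z & dotp c z < del.
  apply: NNPP => hno; apply: hFk; case: hQk => p [Qp hp]; exists p; split => // i.
  apply/hF; split => //; apply/eqP; rewrite eq_le hval //= leNgt.
  by apply/negP => hlt; apply: hno; exists (p i).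
apply: NNPP => hno.
have tightQ j : (forall y, F y -> dotp (A j) y = b j) -> forall y, Q y -> dotp (A j) y = b j.
  move=> hj y Qy; apply/eqP; rewrite eq_le Qy /= leNgt; apply/negP => hy.
  by apply: hno; exists j; split => //; exists y.
have [y0 Fy0 hy0] := face_rel_interior hF Ff0.
have [Qy0 cy0] := iffLR (hF y0) Fy0.
have [t t_gt0 Qw] : exists2 t, 0 < t & Q (fun i => (1 + t) * y0 i + (- t) * z i).
  apply: polyh_extend_past => // j; case: (hy0 j) => [|hj]; [by left | right].
  by rewrite !(tightQ j hj).
by have := hval _ Qw; rewrite dotp_comb cy0; nra.
Qed.

Lemma facet_eq_row F j : facet Q F -> (forall y, F y -> dotp (A j) y = b j) ->
  forall z, Q z -> dotp (A j) z < b j ->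
  forall x, F x <-> Q x /\ dotp (A j) x = b j.
Proof.
move=> [[c [del [hval hF]]] [k [[_ hQk] [[p [Fp hp]] _]]]] hj z Qz hz x.
split => [Fx | [Qx hx]]; first by case/hF: (Fx) => Qx _; split => //; exact: hj.
apply/hF; split => //; apply: NNPP => hne; apply: hQk.
have FQ y : F y -> Q y by case/hF.
have hp1 : aff_indep (extend_pts p x).
  apply: (aff_indep_extend (g := c) (gam := del)) => // [i|]; last exact/eqP.
  by case/hF: (Fp i).
exists (extend_pts (extend_pts p x) z); split.
  by apply: extend_ptsP => //; apply: extend_ptsP => // i; exact: FQ.
apply: (aff_indep_extend (g := A j) (gam := b j)) => //; last by rewrite lt_eqF.
by apply: (extend_ptsP (X := fun y => dotp (A j) y = b j)) hx => i; exact: hj.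
Qed.

(* The extra slot [ord0] is for the empty facet of a zero-dimensional [Q]. *)
Lemma facets_at_most_polyh : facets_at_most Q m.+1.
Proof.
exists (fun j x => if unlift ord0 j is Some j' then Q x /\ dotp (A j') x = b j' else False).
move=> F facetF; case: (classic (exists f0, F f0)) => [[f0 Ff0]|hemp]; last first.
  by exists ord0 => x; rewrite unlift_none; split => // Fx; apply: hemp; exists x.
have [j [hj [z Qz hz]]] := facet_tight_row facetF Ff0.
by exists (lift ord0 j); rewrite liftK; exact: facet_eq_row.
Qed.

End PolyhedronFacets.

Section LinearSystems.
Variable R : realFieldType.

Definition lin_eval (V : Type) (L : seq (R * V)) (y : V -> R) : R :=
  \sum_(p <- L) p.1 * y p.2.

Definition lin_coef (V : eqType) (L : seq (R * V)) (v : V) : R :=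
  \sum_(p <- L) p.1 * (p.2 == v)%:R.

Lemma lin_eval_cons V p (L : seq (R * V)) y : lin_eval (p :: L) y = p.1 * y p.2 + lin_eval L y.
Proof. exact: big_cons. Qed.

Lemma lin_eval_nil V (y : V -> R) : lin_eval [::] y = 0.
Proof. exact: big_nil. Qed.

Lemma lin_eval_map (I : finType) V c (f : I -> V) y :
  lin_eval [seq (c, f i) | i <- enum I] y = c * \sum_i y (f i).
Proof. by rewrite /lin_eval big_map big_enum mulr_sumr; apply: eq_bigl => i; rewrite inE. Qed.

Lemma lin_eval_map_filter (I : finType) V c (f : I -> V) (P : pred I) y :
  lin_eval [seq (c, f i) | i <- enum I & P i] y = c * \sum_(i | P i) y (f i).
Proof. by rewrite /lin_eval big_map big_filter big_enum_cond mulr_sumr. Qed.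

Lemma lin_eval_coef (V : finType) L (y : V -> R) : \sum_v lin_coef L v * y v = lin_eval L y.
Proof.
rewrite /lin_coef /lin_eval; under eq_bigr do rewrite mulr_suml.
rewrite exchange_big /=; apply: eq_bigr => p _.
rewrite (bigD1 p.2) //= eqxx mulr1 big1 ?addr0 // => v hv.
by rewrite eq_sym (negbTE hv) mulr0 mul0r.
Qed.

Lemma dotp_lin_coef (V : finType) L (y : V -> R) :
  dotp (fun i : 'I_#|V| => lin_coef L (enum_val i)) (fun i => y (enum_val i)) = lin_eval L y.
Proof.
rewrite -lin_eval_coef /dotp (reindex (@enum_val V V)) //.
by exists enum_rank => i _; [exact: enum_valK | exact: enum_rankK].
Qed.

Lemma xc_at_most_system (I V C : finType) (L : C -> seq (R * V)) (b : C -> R)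
    (M : I -> seq (R * V)) (P : (I -> R) -> Prop) :
  (forall x, P x <-> exists y : V -> R,
     (forall j, lin_eval (L j) y <= b j) /\ forall e, x e = lin_eval (M e) y) ->
  xc_at_most P #|C|.+1.
Proof.
move=> hP.
exists #|V|, #|C|, (fun j i => lin_coef (L (enum_val j)) (enum_val i)),
  (fun j => b (enum_val j)), (fun e i => lin_coef (M e) (enum_val i)).
split; first exact: facets_at_most_polyh.
move=> x; split.
  case/hP => y [hL hM]; exists (fun i => y (enum_val i)).
  by split => [j|e]; rewrite dotp_lin_coef.
case=> y [hL hM]; apply/hP; exists (fun v => y (enum_rank v)).
have hy K : dotp (fun i => lin_coef K (enum_val i)) y = lin_eval K (fun v => y (enum_rank v)).
  by rewrite -dotp_lin_coef; apply: eq_dotp => i; rewrite enum_valK.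
by split => [j|e]; rewrite -hy; [have := hL (enum_rank j); rewrite enum_rankK | exact: hM].
Qed.

Lemma xc_at_most_empty (I : finType) (P : (I -> R) -> Prop) :
  (forall x, ~ P x) -> xc_at_most P 0.
Proof.
move=> hP.
have hQ y : ~ polyh (fun (_ : 'I_1) (_ : 'I_0) => 0 : R) (fun _ => -1) y.
  by move=> h; have := h ord0; rewrite /dotp big_ord0; lra.
exists 0, 1, (fun _ _ => 0), (fun _ => -1), (fun _ _ => 0); split.
  exists (fun _ _ => False) => F [_ [k [[[p [hp _]] _] _]]].
  by case: (hQ _ (hp ord0)).
by move=> x; split => [/hP // | [y [hy _]]]; case: (hQ _ hy).
Qed.
End LinearSystems.

Lemma normr_comb_comonotone (R : realFieldType) (t x y : R) :
  0 <= t <= 1 -> 0 <= x * y -> t * `|x| + (1 - t) * `|y| = `|t * x + (1 - t) * y|.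
Proof.
case/andP => t0 t1 hxy; have t1' : 0 <= 1 - t by rewrite subr_ge0.
case: (lerP 0 x) => hx; case: (lerP 0 y) => hy.
- by rewrite !ger0_norm // addr_ge0 // mulr_ge0.
- have -> : x = 0 by nra.
  by rewrite normr0 !mulr0 !add0r normrM (ger0_norm t1').
- have -> : y = 0 by nra.
  by rewrite normr0 !mulr0 !addr0 normrM (ger0_norm t0).
- by rewrite (ltr0_norm hx) (ltr0_norm hy) ler0_norm; [ring | nra].
Qed.

Section CutDecomposition.
Variables (R : realFieldType) (n : nat).
Local Notation V := 'I_n.

Definition separates (v w : V) (S : {set V}) : bool := (v \in S) != (w \in S).

(* A randomized rounding of the fractional cut [rho] to cuts [delta S]. *)
Record cut_decomposition (rho : V -> R) (mu : {set V} -> R) : Prop := CutDecomposition {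
  cut_weight_ge0 : forall S, 0 <= mu S;
  cut_weight_sum : \sum_S mu S = 1;
  cut_support : forall S, mu S != 0 -> forall v,
    (rho v = 0 -> v \in S) /\ (rho v = 1 -> v \notin S);
  cut_separation : forall v w, \sum_S mu S * (separates v w S)%:R <= `|rho v - rho w| }.

Lemma cut_decomposition01 rho : (forall v, rho v = 0 \/ rho v = 1) ->
  exists mu, cut_decomposition rho mu.
Proof.
move=> h01; pose S0 := [set v | rho v == 0].
have sum_at_S0 (F : {set V} -> R) : \sum_S (S == S0)%:R * F S = F S0.
  rewrite (bigD1 S0) //= eqxx mul1r big1 ?addr0 // => S /negbTE ->; exact: mul0r.
exists (fun S => (S == S0)%:R); split.
- by move=> S; exact: ler0n.
- by rewrite -[RHS](sum_at_S0 (fun _ => 1)); apply: eq_bigr => S _; rewrite mulr1.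
- move=> S; case: (eqVneq S S0) => [-> _ v | _]; last by rewrite /= mulr0n eqxx.
  by rewrite !inE; split => ->; rewrite ?eqxx ?oner_eq0.
- move=> v w; rewrite sum_at_S0 /separates !inE.
  by case: (h01 v) => ->; case: (h01 w) => ->;
    rewrite ?eqxx ?oner_eq0 ?subrr ?normr0 ?sub0r ?subr0 ?normrN ?normr1.
Qed.

Section Mix.
Variables (rho rl rh : V -> R) (t : R).
Hypotheses (t_ge0 : 0 <= t) (t_le1 : t <= 1).
Hypothesis rho_mix : forall v, rho v = t * rl v + (1 - t) * rh v.
Hypothesis comonotone : forall v w, 0 <= (rl v - rl w) * (rh v - rh w).
Hypothesis ends_fixed : forall v, rho v = 0 \/ rho v = 1 -> rl v = rho v /\ rh v = rho v.

Lemma cut_decomposition_mix ml mh : cut_decomposition rl ml -> cut_decomposition rh mh ->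
  cut_decomposition rho (fun S => t * ml S + (1 - t) * mh S).
Proof.
have t1 : 0 <= 1 - t by rewrite subr_ge0.
move=> [ml0 ml1 ml2 ml3] [mh0 mh1 mh2 mh3]; split.
- by move=> S; rewrite addr_ge0 ?mulr_ge0.
- by rewrite big_split /= -!mulr_sumr ml1 mh1; ring.
- move=> S hS v.
  have [hl | hh] : ml S != 0 \/ mh S != 0.
    case: (eqVneq (ml S) 0) => hl; [right | by left].
    by apply: contraNneq hS => hh; rewrite hl hh !mulr0 addr0.
  + have [h0 h1] := ml2 S hl v; split => hv.
      by apply: h0; have [-> _] := ends_fixed (or_introl hv).
    by apply: h1; have [-> _] := ends_fixed (or_intror hv).
  + have [h0 h1] := mh2 S hh v; split => hv.
      by apply: h0; have [_ ->] := ends_fixed (or_introl hv).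
    by apply: h1; have [_ ->] := ends_fixed (or_intror hv).
- move=> v w; rewrite (eq_bigr (fun S => t * (ml S * (separates v w S)%:R) +
    (1 - t) * (mh S * (separates v w S)%:R))) => [|S _]; last by ring.
  rewrite big_split /= -!mulr_sumr !rho_mix.
  have -> : t * rl v + (1 - t) * rh v - (t * rl w + (1 - t) * rh w) =
    t * (rl v - rl w) + (1 - t) * (rh v - rh w) by ring.
  rewrite -normr_comb_comonotone ?t_ge0 //.
  by apply: lerD; apply: ler_wpM2l.
Qed.
End Mix.

Definition lower_level (rho : V -> R) (a b : R) v := if rho v == a then b else rho v.
Definition raise_level (rho : V -> R) (a : R) v := if rho v == a then 1 else rho v.

(* Replacing the level [a] by the next lower level [b], resp. by [1], gives
   two functions with fewer fractional levels whose mixture is [rho]. *)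
Lemma cut_decomposition_level_split (rho : V -> R) (a b : R) :
  (forall v, 0 <= rho v <= 1) -> 0 <= b -> b < a -> a < 1 ->
  (forall v, rho v < a -> rho v <= b) -> (forall v, a < rho v -> rho v = 1) ->
  (exists mu, cut_decomposition (lower_level rho a b) mu) ->
  (exists mu, cut_decomposition (raise_level rho a) mu) ->
  exists mu, cut_decomposition rho mu.
Proof.
move=> hr b0 ba a1 below above [ml hml] [mh hmh].
have b1 : 0 < 1 - b by lra.
pose t := (1 - a) / (1 - b).
exists (fun S => t * ml S + (1 - t) * mh S); apply: cut_decomposition_mix hml hmh.
- by rewrite divr_ge0 ?ltW //; lra.
- by rewrite ler_pdivrMr // mul1r; lra.
- move=> v; rewrite /lower_level /raise_level; case: eqP => [->|_]; last by ring.
  by rewrite /t; field; rewrite lt0r_neq0.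
- move=> v w; rewrite /lower_level /raise_level.
  have [hv1 hw1] := (hr v, hr w); move: hv1 hw1 => /andP[? ?] /andP[? ?].
  case: eqP => hva; case: eqP => hwa; rewrite ?subrr ?mul0r ?mulr0 //;
    last by rewrite -expr2 sqr_ge0.
  + case: (ltgtP (rho w) a) hwa => // hw _; first by have := below w hw; nra.
    by rewrite (above w hw) subrr mulr0.
  + case: (ltgtP (rho v) a) hva => // hv _; first by have := below v hv; nra.
    by rewrite (above v hv) subrr mulr0.
- move=> v hv; rewrite /lower_level /raise_level; case: eqP => // hva.
  by move: hv; rewrite hva; lra.
Qed.

Lemma top_fractional_level (rho : V -> R) v0 :
  (forall v, 0 <= rho v <= 1) -> 0 < rho v0 < 1 ->
  exists2 va, 0 < rho va < 1 & exists b, [/\ 0 <= b < rho va,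
    forall w, rho w < rho va -> rho w <= b, forall w, rho va < rho w -> rho w = 1
    & b = 0 \/ exists2 w, rho w = b & rho w < rho va].
Proof.
move=> hr hv0.
have [va frac_a max_a] : exists2 va, 0 < rho va < 1 & forall v, 0 < rho v < 1 -> rho v <= rho va.
  by case: (@arg_maxP _ _ _ v0 (fun v => 0 < rho v < 1) rho hv0) => va; exists va.
exists va => //; move: frac_a max_a; set a := rho va => /andP[a0 a1] max_a.
exists (\big[Order.max/0]_(w | rho w < a) rho w); split.
- by rewrite bigmax_ge_id; apply: bigmax_lt.
- by move=> w hw; exact: le_bigmax_cond.
- move=> w hw; apply/eqP; rewrite eq_le (andP (hr w)).2 leNgt; apply/negP => hw1.
  by have := max_a w; rewrite (lt_trans a0 hw) hw1 => /(_ isT); rewrite leNgt hw.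
- case: (boolP [exists w, rho w < a]) => [/existsP[w0 hw0] | /existsPn none]; last first.
    by left; rewrite big_pred0 // => w; exact: negbTE.
  have [w hw bw] := eq_bigmax w0 (fun w => rho w < a) rho hw0 (fun w _ => (andP (hr w)).1).
  by right; exists w.
Qed.

Lemma cut_decomposition_of_levels N (L : seq R) (rho : V -> R) : (size L <= N)%N ->
  (forall v, 0 <= rho v <= 1) -> (forall v, 0 < rho v < 1 -> rho v \in L) ->
  exists mu, cut_decomposition rho mu.
Proof.
elim: N L rho => [|N IH] L rho hL hr hlev;
  (case: (boolP [exists v, 0 < rho v < 1]) => [/existsP[v0 hv0] | /existsPn no_frac];
    last (apply: cut_decomposition01 => v; have := no_frac v; have := hr v; lra)).
  by case: L hL hlev => // _ /(_ v0 hv0).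
have [va frac_a [b [/andP[b0 ba] below above b_level]]] := top_fractional_level hr hv0.
move: frac_a ba below above b_level; set a := rho va => /andP[a0 a1] ba below above b_level.
pose L' := filter (predC (pred1 a)) L.
have hL' : (size L' <= N)%N.
  have aL : a \in L by apply: hlev; rewrite a0 a1.
  rewrite size_filter -ltnS (leq_trans _ hL) // -(count_predC (pred1 a) L) -add1n leq_add2r.
  by rewrite -has_count has_pred1.
have inL' v : 0 < rho v < 1 -> rho v != a -> rho v \in L'.
  by move=> hv hva; rewrite mem_filter /= hva hlev.
apply: (cut_decomposition_level_split hr b0 ba a1 below above).
- apply: (IH L') => // v; rewrite /lower_level; case: eqP => [_ | /eqP hva].
  + lra.
  + exact: hr.
  + move=> hb; case: b_level => [b_eq0 | [w bw hwa]]; first by move: hb; rewrite b_eq0; lra.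
    by rewrite -bw; apply: inL'; rewrite ?lt_eqF // bw.
  + by move=> hv; exact: inL'.
- apply: (IH L') => // v; rewrite /raise_level; case: eqP => [_ | /eqP hva].
  + lra.
  + exact: hr.
  + lra.
  + by move=> hv; exact: inL'.
Qed.

Lemma cut_support_setI (rho : V -> R) mu (T U : {set V}) :
  cut_decomposition rho mu -> U \subset T ->
  (forall v, v \in U -> rho v = 0) -> (forall v, v \in T :\: U -> rho v = 1) ->
  forall S, mu S != 0 -> S :&: T = U.
Proof.
move=> [_ _ supp _] UT rhoU rhoTU S /supp hS; apply/setP => v; rewrite inE.
case: (boolP (v \in U)) => vU; first by rewrite (hS v).1 ?rhoU // (subsetP UT).
by apply/negbTE; rewrite negb_and orbC -implybE; apply/implyP => vT;
  apply: (hS v).2; apply: rhoTU; rewrite inE vU.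
Qed.

Theorem cut_decomposition_exists (rho : V -> R) : (forall v, 0 <= rho v <= 1) ->
  exists mu, cut_decomposition rho mu.
Proof.
move=> hr; apply: (@cut_decomposition_of_levels _ [seq rho v | v <- enum V]) => // v _.
by apply: map_f; rewrite mem_enum.
Qed.

End CutDecomposition.

Section Edges.
Variable n : nat.
Local Notation V := 'I_n.

Lemma edge_ends (e : edge n) : exists v w, v != w /\ val e = [set v; w].
Proof. exact/cards2P/(valP e). Qed.

Lemma card_pair_setI (v w : V) (S : {set V}) : v != w ->
  #|[set v; w] :&: S| = ((v \in S) + (w \in S))%N.
Proof.
move=> vw; have set1I x : [set x] :&: S = if x \in S then [set x] else set0.
  by case: ifP => xS; apply/setP => y; rewrite !inE; case: eqP => // ->.
rewrite setIUl !set1I.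
by case: (v \in S); case: (w \in S); rewrite ?setU0 ?set0U ?cards0 ?cards1 ?cards2 ?vw.
Qed.

Lemma cut_vec_pair (R : realFieldType) (S : {set V}) (e : edge n) v w :
  v != w -> val e = [set v; w] -> cut_vec R S e = (separates v w S)%:R.
Proof.
move=> vw ve; rewrite /cut_vec ve card_pair_setI // /separates.
by case: (v \in S); case: (w \in S).
Qed.

Lemma card_pair (v w : V) : v != w -> #|[set v; w]| == 2%N.
Proof. by move=> vw; rewrite cards2 vw. Qed.

Definition pair_edge (v w : V) (vw : v != w) : edge n := exist _ [set v; w] (card_pair vw).
End Edges.

Section TcutFormulation.
Variables (R : realFieldType) (n : nat) (T : {set 'I_n}).
Local Notation V := 'I_n.
Local Notation UT := {U : {set V} | U \subset T}.

(* One block per trace [U = S :&: T] of a cut: [lam_var U] stands for the total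
   weight of the cuts [delta S] with this trace, [pot_var U v] for the weight of
   those with [v \notin S], and [edge_var U e] dominates their contribution to [x e]. *)
Local Notation Var := ((UT + UT * V) + UT * edge n)%type.
Definition lam_var (U : UT) : Var := inl (inl U).
Definition pot_var (U : UT) (v : V) : Var := inl (inr (U, v)).
Definition edge_var (U : UT) (e : edge n) : Var := inr (U, e).
Arguments lam_var : simpl never.
Arguments pot_var : simpl never.
Arguments edge_var : simpl never.

Definition pot_lo (U : UT) (v : V) : R := (v \in T :\: val U)%:R.
Definition pot_hi (U : UT) (v : V) : R := (v \notin val U)%:R.
Definition joins (v w : V) (e : edge n) : bool := val e == [set v; w].

Local Notation Con := ((bool + UT * bool) + (UT * V * bool + UT * V * V))%type.

Definition Tcut_row (j : Con) : seq (R * Var) :=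
  match j with
  | inl (inl true) => [seq (1, lam_var U) | U <- enum {: UT}]
  | inl (inl false) => [seq (-1, lam_var U) | U <- enum {: UT}]
  | inl (inr (U, true)) => [:: (-1, lam_var U)]
  | inl (inr (U, false)) => [:: ((~~ odd #|val U|)%:R, lam_var U)]
  | inr (inl (U, v, true)) => [:: (pot_lo U v, lam_var U); (-1, pot_var U v)]
  | inr (inl (U, v, false)) => [:: (1, pot_var U v); (- pot_hi U v, lam_var U)]
  | inr (inr (U, v, w)) => (1, pot_var U v) :: (-1, pot_var U w) ::
                           [seq (-1, edge_var U e) | e <- enum {: edge n} & joins v w e]
  end.

Definition Tcut_bound (j : Con) : R :=
  match j with inl (inl true) => 1 | inl (inl false) => -1 | _ => 0 end.

Definition Tcut_proj (e : edge n) : seq (R * Var) := [seq (1, edge_var U e) | U <- enum {: UT}].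

Record Tcut_lifting (y : Var -> R) : Prop := TcutLifting {
  lam_sum : \sum_U y (lam_var U) = 1;
  lam_ge0 : forall U, 0 <= y (lam_var U);
  lam_even : forall U : UT, ~~ odd #|val U| -> y (lam_var U) <= 0;
  pot_ge : forall U v, pot_lo U v * y (lam_var U) <= y (pot_var U v);
  pot_le : forall U v, y (pot_var U v) <= pot_hi U v * y (lam_var U);
  edge_ge : forall U v w,
    y (pot_var U v) - y (pot_var U w) <= \sum_(e | joins v w e) y (edge_var U e) }.

Lemma Tcut_rowsP (y : Var -> R) :
  (forall j, lin_eval (Tcut_row j) y <= Tcut_bound j) <-> Tcut_lifting y.
Proof.
split=> [h | [h1 h2 h3 h4 h5 h6]].
  split.
  - have := h (inl (inl true)); have := h (inl (inl false)).
    rewrite /= !lin_eval_map mulN1r mul1r lerN2 => h1 h2.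
    by apply/le_anti/andP; split; [exact: h2 | exact: h1].
  - by move=> U; have := h (inl (inr (U, true))); rewrite /= lin_eval_cons lin_eval_nil /=; lra.
  - move=> U hU; have := h (inl (inr (U, false))).
    by rewrite /= lin_eval_cons lin_eval_nil hU /=; lra.
  - move=> U v; have := h (inr (inl (U, v, true))).
    by rewrite /= !lin_eval_cons lin_eval_nil /=; lra.
  - move=> U v; have := h (inr (inl (U, v, false))).
    by rewrite /= !lin_eval_cons lin_eval_nil /=; lra.
  - move=> U v w; have := h (inr (inr (U, v, w))).
    by rewrite /= !lin_eval_cons lin_eval_map_filter /=; lra.
case=> [[[] | [U []]] | [[[U v] []] | [[U v] w]]] /=;
  rewrite ?lin_eval_map ?lin_eval_cons ?lin_eval_nil ?lin_eval_map_filter /=.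
- by rewrite mul1r le_eqVlt; apply/orP; left; apply/eqP; exact: h1.
- by rewrite mulN1r lerN2 le_eqVlt; apply/orP; left; apply/eqP; symmetry; exact: h1.
- by have := h2 U; lra.
- by case: (boolP (odd _)) => hU /=; [lra | have := h3 U hU; lra].
- by have := h4 U v; lra.
- by have := h5 U v; lra.
- by have := h6 U v w; lra.
Qed.

Lemma sum_joins (F : edge n -> R) (e : edge n) v w : val e = [set v; w] ->
  \sum_(e' | joins v w e') F e' = F e.
Proof. by move=> ve; apply: big_pred1 => e'; rewrite /joins -ve val_eqE. Qed.

Lemma pot_dist_le_edge y U v w (e : edge n) : Tcut_lifting y -> val e = [set v; w] ->
  `|y (pot_var U v) - y (pot_var U w)| <= y (edge_var U e).
Proof.
move=> hy ve; have ve' : val e = [set w; v] by rewrite ve setUC.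
have := edge_ge hy U v w; have := edge_ge hy U w v.
rewrite (sum_joins _ ve) (sum_joins _ ve') ler_norml.
by move=> h1 h2; rewrite h2 andbT; lra.
Qed.

Lemma pot_lo_le_hi (U : UT) v : [/\ 0 <= pot_lo U v, pot_lo U v <= pot_hi U v & pot_hi U v <= 1].
Proof. by rewrite /pot_lo /pot_hi inE; case: (v \in val U); case: (v \in T). Qed.

Lemma pot_in_trace (U : UT) v : v \in val U -> pot_lo U v = 0 /\ pot_hi U v = 0.
Proof. by rewrite /pot_lo /pot_hi inE => ->. Qed.

Lemma pot_off_trace (U : UT) v : v \in T :\: val U -> pot_lo U v = 1 /\ pot_hi U v = 1.
Proof. by rewrite /pot_lo /pot_hi !inE => /andP[-> ->]. Qed.

Lemma Tcut_lifting_block y (U : UT) : Tcut_lifting y ->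
  exists mu : {set V} -> R, [/\ forall S, 0 <= mu S, \sum_S mu S = 1,
    forall S, mu S != 0 -> S :&: T = val U &
    forall e, y (lam_var U) * \sum_S mu S * cut_vec R S e <= y (edge_var U e)].
Proof.
move=> hy; set lam := y (lam_var U).
pose rho v := if lam == 0 then pot_lo U v else y (pot_var U v) / lam.
have rhoE v : rho v = if lam == 0 then pot_lo U v else y (pot_var U v) / lam by [].
clearbody rho.
have rho_range v : pot_lo U v <= rho v <= pot_hi U v.
  have [lo0 lohi hi1] := pot_lo_le_hi U v.
  rewrite rhoE; case: eqP => [_ | lam0]; first by rewrite lexx.
  have lam_gt0 : 0 < lam by rewrite lt_def (lam_ge0 hy) andbT; apply/eqP.
  by rewrite ler_pdivlMr // ler_pdivrMr // (pot_ge hy) (pot_le hy).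
have [mu hmu] : exists mu, cut_decomposition rho mu.
  apply: cut_decomposition_exists => v; have := rho_range v.
  by have [? ? ?] := pot_lo_le_hi U v; lra.
exists mu; split; [exact: cut_weight_ge0 hmu | exact: cut_weight_sum hmu | |].
  apply: cut_support_setI hmu (valP U) _ _ => v.
    by move/pot_in_trace => [lo0 hi0]; have := rho_range v; rewrite lo0 hi0; lra.
  by move/pot_off_trace => [lo1 hi1]; have := rho_range v; rewrite lo1 hi1; lra.
move=> e; have [v [w [vw ve]]] := edge_ends e.
rewrite (eq_bigr (fun S => mu S * (separates v w S)%:R)) => [|S _]; last first.
  by rewrite (cut_vec_pair _ _ vw ve).
apply: le_trans (ler_wpM2l (lam_ge0 hy U) (cut_separation hmu v w)) _.
apply: le_trans (pot_dist_le_edge U hy ve).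
rewrite !rhoE -/lam; case: eqP => [-> | /eqP lam0]; first by rewrite mul0r.
have lam_gt0 : 0 < lam by rewrite lt_def lam0 (lam_ge0 hy).
by rewrite -mulrBl normrM (gtr0_norm (_ : 0 < lam^-1)) ?invr_gt0 // mulrCA mulfV // mulr1.
Qed.

Lemma domTcut_of_lifting y : Tcut_lifting y -> domTcut T (fun e => \sum_U y (edge_var U e)).
Proof.
move=> hy; have /fin_all_exists[mu hmu] U := Tcut_lifting_block U hy.
pose lamS S := \sum_U y (lam_var U) * mu U S.
exists (fun e => \sum_S lamS S * cut_vec R S e); split.
  exists lamS; split; [|split; [|split]] => //.
  - move=> S; apply: sumr_ge0 => U _; rewrite mulr_ge0 ?(lam_ge0 hy) //.
    by have [] := hmu U.
  - move=> S notTcut; apply: big1 => U _.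
    have [-> | muS] := eqVneq (mu U S) 0; first by rewrite mulr0.
    have [_ _ traceU _] := hmu U.
    have lam0 : y (lam_var U) = 0.
      apply/le_anti; rewrite (lam_ge0 hy) andbT (lam_even hy) //.
      by rewrite -(traceU S muS).
    by rewrite lam0 mul0r.
  - rewrite exchange_big /= -(lam_sum hy); apply: eq_bigr => U _.
    by have [_ sum1 _ _] := hmu U; rewrite -mulr_sumr sum1 mulr1.
move=> e; under eq_bigr do rewrite mulr_suml.
rewrite exchange_big /=; apply: ler_sum => U _.
have [_ _ _ dom] := hmu U; apply: le_trans (dom e); rewrite mulr_sumr.
by apply: ler_sum => S _; rewrite mulrA.
Qed.

Definition trace (S : {set V}) : UT := exist _ (S :&: T) (subsetIr S T).

Lemma pot_range_trace (U : UT) S v : S :&: T = val U ->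
  pot_lo U v <= (v \notin S)%:R <= pot_hi U v.
Proof.
move=> tS; rewrite /pot_lo /pot_hi -tS !inE.
by case: (v \in S); case: (v \in T); rewrite /= ?lexx ?ler01.
Qed.

Lemma sum_trace (F : {set V} -> R) : \sum_U \sum_(S | trace S == U) F S = \sum_S F S.
Proof. by rewrite (partition_big trace predT). Qed.

Lemma lifting_of_domTcut x : domTcut T x ->
  exists y, Tcut_lifting y /\ forall e, x e = \sum_U y (edge_var U e).
Proof.
move=> [z [Pz z_le_x]]; case: Pz => lam [lam0 [lamT [lam1 zE]]].
(* The slack [x - z] is charged to the block of the empty trace. *)
pose U0 : UT := exist _ set0 (sub0set T).
pose y (c : Var) := match c with
  | inl (inl U) => \sum_(S | trace S == U) lam S
  | inl (inr (U, v)) => \sum_(S | trace S == U) lam S * (v \notin S)%:R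
  | inr (U, e) => \sum_(S | trace S == U) lam S * cut_vec R S e + (U == U0)%:R * (x e - z e)
  end.
have edge_ge0 U e : 0 <= y (edge_var U e).
  rewrite /y /edge_var addr_ge0 ?mulr_ge0 ?subr_ge0 //.
  by apply: sumr_ge0 => S _; rewrite mulr_ge0 // /cut_vec; case: ifP.
exists y; split; last first.
  move=> e; rewrite /y /edge_var big_split /= sum_trace -zE (bigD1 U0) //= eqxx mul1r.
  by rewrite big1 => [|U /negbTE ->]; rewrite ?mul0r; ring.
split; rewrite /y /lam_var /pot_var /edge_var /=.
- by rewrite sum_trace.
- by move=> U; apply: sumr_ge0.
- move=> U even_U; rewrite le_eqVlt big1 ?eqxx // => S /eqP tS.
  by apply: lamT; rewrite /Tcut_set [S :&: T](congr1 val tS).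
- move=> U v; rewrite mulr_sumr; apply: ler_sum => S /eqP tS.
  by rewrite mulrC ler_wpM2l // (andP (pot_range_trace v (congr1 val tS))).1.
- move=> U v; rewrite mulr_sumr; apply: ler_sum => S /eqP tS.
  by rewrite [leRHS]mulrC ler_wpM2l // (andP (pot_range_trace v (congr1 val tS))).2.
move=> U v w; have [<- | vw] := eqVneq v w.
  by rewrite subrr; apply: sumr_ge0 => e _; exact: edge_ge0.
rewrite (sum_joins _ (erefl : val (pair_edge vw) = [set v; w])).
apply: le_trans (_ : \sum_(S | trace S == U) lam S * cut_vec R S (pair_edge vw) <= _).
  rewrite -sumrB; apply: ler_sum => S _; rewrite -mulrBr ler_wpM2l //.
  rewrite (cut_vec_pair _ _ vw (erefl : val (pair_edge vw) = [set v; w])) /separates.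
  by case: (v \in S); case: (w \in S); rewrite /= ?mulr0n ?mulr1n; lra.
by rewrite lerDl mulr_ge0 // subr_ge0.
Qed.

Lemma card_traces : #|{: UT}| = (2 ^ #|T|)%N.
Proof. by rewrite card_sig -card_powerset; apply: eq_card => A; rewrite powersetE inE. Qed.

Theorem xc_domTcut : xc_at_most (@domTcut R n T) (2 ^ #|T| * (n ^ 2 + 2 * n + 2) + 3)%N.
Proof.
have -> : (2 ^ #|T| * (n ^ 2 + 2 * n + 2) + 3 = #|{: Con}|.+1)%N.
  by rewrite !card_sum !card_prod card_traces card_bool card_ord; ring.
apply: (xc_at_most_system (M := Tcut_proj)) => x.
have projE y e : lin_eval (Tcut_proj e) y = \sum_U y (edge_var U e).
  by rewrite lin_eval_map mul1r.
split=> [/lifting_of_domTcut[y [hy xE]] | [y [/Tcut_rowsP hy xE]]].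
  by exists y; split=> [|e]; [exact/Tcut_rowsP | rewrite xE projE].
have [z [Pz z_le]] := domTcut_of_lifting hy.
by exists z; split=> // e; rewrite xE projE.
Qed.
End TcutFormulation.

Lemma domTcut_ord0 (R : realFieldType) (T : {set 'I_0}) (x : edge 0 -> R) : ~ domTcut T x.
Proof.
move=> [z [Pz _]]; case: Pz => lam [_ [lamT [lam1 _]]].
suff : \sum_S lam S = 0 by rewrite lam1 => /eqP; rewrite oner_eq0.
apply: big1 => S _; apply: lamT.
by have := max_card (mem (S :&: T)); rewrite card_ord leqn0 /Tcut_set => /eqP ->.
Qed.

Theorem corollary3 (R : realFieldType) :
  exists C : R, 0 < C /\
    forall (n : nat) (T : {set 'I_n}),
      exists k : nat,
        (k%:R <= C * (n%:R) ^+ 2 * 2 ^+ #|T|) /\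
        xc_at_most (@domTcut R n T) k.
Proof.
exists 8%:R; split=> [|[|n] T]; first by rewrite ltr0n.
  exists 0%N; split; first by rewrite mulr0n expr0n mulr0 mul0r.
  by apply: xc_at_most_empty; exact: domTcut_ord0.
exists (2 ^ #|T| * (n.+1 ^ 2 + 2 * n.+1 + 2) + 3)%N; split; last exact: xc_domTcut.
rewrite -natrX -(natrX _ 2) -!natrM ler_nat.
have : (0 < 2 ^ #|T|)%N by rewrite expn_gt0.
move: (2 ^ #|T|)%N => K K_gt0; nia.
Qed.
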